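(* Let $\mathcal{D}$ be a distribution on $\mathbb{S}^{d-1}$ for which there exist $C,C'>0$ with $C\mu(A)\le\mathcal{D}(A)\le C'\mu(A)$ for all measurable $A\subseteq\mathbb{S}^{d-1}$, where $\mu$ is the uniform (Haar) probability measure. There exist constants $\beta,\gamma>0$, depending only on $d$ and on $C,C'$, such that for all $\mathbf{x}^{(1)},\mathbf{x}^{(2)}\in\mathbb{S}^{d-1}$ with $\langle\mathbf{x}^{(1)},\mathbf{x}^{(2)}\rangle\ge0$, a random $\xi\sim\mathcal{D}$ satisfies both (1) $\mathrm{sgn}(\langle\mathbf{x}^{(1)},\xi\rangle)=\mathrm{sgn}(\langle\mathbf{x}^{(2)},\xi\rangle)$, and (2) $|\langle\mathbf{x}^{(i)},\xi\rangle|\ge\gamma$ for $i=1,2$, with probability at least $\beta$.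
   Context: $\mathbb{S}^{d-1}$ is the unit sphere in $\mathbb{R}^d$; $\mathrm{sgn}(0)=0$. *)

From HB Require Import structures.
From mathcomp Require Import all_boot all_order all_algebra.
From mathcomp Require Import all_classical all_reals all_analysis.
Set Implicit Arguments. Unset Strict Implicit. Unset Printing Implicit Defensive.
Import Order.TTheory GRing.Theory Num.Theory.
Local Open Scope classical_set_scope.
Local Open Scope ring_scope.

(* R^d is represented by d.-tuple R, which carries the product (= Borel)
   sigma-algebra of mathcomp-analysis (measurable_structure.v). *)

Section Sphere.
Variable R : realType.

Definition dotp (d : nat) (x y : d.-tuple R) : R :=
  \sum_(i < d) tnth x i * tnth y i.

Definition enorm (d : nat) (x : d.-tuple R) : R := Num.sqrt (dotp x x).

Definition sphere (d : nat) : set (d.-tuple R) := [set x | enorm x = 1].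

Definition unit_ball (d : nat) : set (d.-tuple R) := [set x | enorm x <= 1].

(* Lebesgue measure on R^d, defined as the iterated (Tonelli) integral of
   the indicator function with respect to the one-dimensional Lebesgue
   measure:  vol_0 E = 1_E(()),  vol_{n+1} E = int vol_n (E_x) dx. *)
Fixpoint lebesgue_vol (n : nat) : set (n.-tuple R) -> \bar R :=
  match n return set (n.-tuple R) -> \bar R with
  | 0 => fun E => ((\1_E [tuple] : R))%:E
  | n.+1 => fun E =>
      (\int[@lebesgue_measure R]_x lebesgue_vol [set t | E (cons_tuple x t)])%E
  end.

Definition normalize (d : nat) (x : d.-tuple R) : d.-tuple R :=
  [tuple of map (fun a => a / enorm x) x].

Definition sphere_cone (d : nat) (A : set (d.-tuple R)) : set (d.-tuple R) :=
  [set t | 0 < enorm t <= 1 /\ A (normalize t)].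

(* the uniform (rotation-invariant, Haar) probability measure on S^{d-1},
   realized as the normalized cone measure:
   mu(A) = vol(cone A) / vol(unit ball). *)
Definition sphere_unif (d : nat) (A : set (d.-tuple R)) : \bar R :=
  (lebesgue_vol (sphere_cone A) * (fine (lebesgue_vol (@unit_ball d)))^-1%:E)%E.

End Sphere.

From HB Require Import structures.
From mathcomp Require Import all_boot all_order all_algebra.
From mathcomp Require Import all_classical all_reals all_analysis.
From mathcomp Require Import ring lra.
Set Implicit Arguments. Unset Strict Implicit. Unset Printing Implicit Defensive.
Import Order.TTheory GRing.Theory Num.Theory.
Local Open Scope classical_set_scope.
Local Open Scope ring_scope.

(* Let A be the set of u in S^{d-1} with <x1,u> >= 1/8 and <x2,u> >= 1/8;
   every point of A satisfies (1) and (2) with gamma = 1/8.  For s with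
   d s <= 1/8, every t in the cube of half-side s centred at (x1 + x2)/4
   has <x_i,t> >= (1 + <x1,x2>)/4 - d s >= 1/8 (i = 1, 2) and |t| <= 1,
   so the cube lies in the cone over A.  As the unit ball lies in the cube [-1,1]^d, the cone
   measure gives mu(A) >= (2s)^d / 2^d = s^d, hence D(A) >= C s^d. *)

Section ge0_le_integralT.
Local Open Scope ereal_scope.
Context d (T : measurableType d) (R : realType) (mu : {measure set T -> \bar R}).

(* Unlike [ge0_le_integral], no measurability is needed: a nonnegative
   integral is a supremum over the simple functions below the integrand. *)
Lemma ge0_le_integralT (f g : T -> \bar R) :
  (forall x, 0 <= f x) -> (forall x, f x <= g x) ->
  \int[mu]_x f x <= \int[mu]_x g x.
Proof.
move=> f0 fg; have g0 x : 0 <= g x by apply: le_trans (fg x).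
rewrite !ge0_integralTE//; apply: ereal_sup_le => _ [h hf <-].
by exists h => //= x; apply: le_trans (hf x) (fg x).
Qed.

End ge0_le_integralT.

Section lebesgue_vol.
Variable R : realType.
Implicit Types n : nat.

Lemma lebesgue_vol_ge0 n (E : set (n.-tuple R)) : (0 <= lebesgue_vol E)%E.
Proof.
elim: n E => [|n IH] E /=; first by rewrite lee_fin indicE.
by apply: integral_ge0 => x _; exact: IH.
Qed.

Lemma le_lebesgue_vol n (E F : set (n.-tuple R)) :
  E `<=` F -> (lebesgue_vol E <= lebesgue_vol F)%E.
Proof.
elim: n E F => [|n IH] E F EF /=.
  rewrite lee_fin !indicE; case: (boolP (_ \in E)) => [/set_mem/EF FE|].
    by rewrite (mem_set FE).
  by case: (_ \in F).
apply: ge0_le_integralT => x; first exact: lebesgue_vol_ge0.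
by apply: IH => t /EF.
Qed.

Lemma lebesgue_vol0 n : lebesgue_vol (@set0 (n.-tuple R)) = 0%E.
Proof.
elim: n => [|n IH] /=; first by rewrite indic0.
by apply: integral0_eq => x _; rewrite -IH.
Qed.

Definition box {n} (c : nat -> R) (s : R) : set (n.-tuple R) :=
  [set t | forall i : 'I_n, `|t`_i - c i| <= s].

Lemma box_cons n c s x (t : n.-tuple R) :
  box c s (cons_tuple x t) <-> `|x - c 0%N| <= s /\ box (c \o S) s t.
Proof.
split=> [bxt|[bx bt]].
  by split=> [|i]; [exact: bxt ord0|exact: bxt (lift ord0 i)].
by move=> -[[|i] ltin] //=; exact: (bt (Ordinal (ltin : (i < n)%N))).
Qed.

Lemma lebesgue_vol_box n c s :
  0 <= s -> lebesgue_vol (@box n c s) = ((2 * s) ^+ n)%:E.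
Proof.
move=> s0; elim: n c => [|n IH] c /=; first by rewrite expr0 indicE mem_set //; case.
have sliceE x : lebesgue_vol [set t : n.-tuple R | box c s (cons_tuple x t)] =
    ((\1_(`[c 0%N - s, c 0%N + s]%classic) x)%:E * ((2 * s) ^+ n)%:E)%E.
  rewrite indicE; case: (boolP (x \in _)) => [|xNI].
    rewrite inE /= in_itv /= => xI; rewrite mul1e -(IH (c \o S)).
    congr lebesgue_vol; apply/seteqP; split=> t; first by case/box_cons.
    by move=> bt; apply/box_cons; split=> //; rewrite ler_norml; lra.
  rewrite mul0e -(@lebesgue_vol0 n); congr lebesgue_vol.
  apply/seteqP; split=> t //= /box_cons[+ _]; rewrite ler_norml => xI.
  by case/negP: xNI; rewrite inE /= in_itv /=; lra.
under eq_integral => x _ do rewrite sliceE.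
rewrite ge0_integralZr//; last 2 first.
- apply/measurable_realfun.measurable_EFinP.
  exact: measurable_realfun.measurable_indic.
- by rewrite -[leLHS]/(0%:E) lee_fin exprn_ge0// mulr_ge0.
rewrite integral_indic// setIT [X in (X * _)%E]lebesgue_measure_itv/= lte_fin.
have [_|sle0] := ltrP (c 0%N - s) (c 0%N + s).
  by rewrite -EFinM exprS; congr EFin; ring.
have -> : s = 0 by lra.
by rewrite mul0e mulr0 expr0n.
Qed.

End lebesgue_vol.

Section dotp.
Variable R : realType.
Implicit Types n : nat.

Lemma dotpE n (x y : n.-tuple R) : dotp x y = \sum_(i < n) x`_i * y`_i.
Proof. by apply: eq_bigr => i _; rewrite !(tnth_nth 0). Qed.

Lemma dotpC n (x y : n.-tuple R) : dotp x y = dotp y x.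
Proof. by apply: eq_bigr => i _; rewrite mulrC. Qed.

Lemma sqr_nth_le_dotp n (x : n.-tuple R) (i : 'I_n) : x`_i ^+ 2 <= dotp x x.
Proof.
rewrite dotpE (bigD1 i) //= -expr2 lerDl.
by apply: sumr_ge0 => j _; rewrite -expr2 sqr_ge0.
Qed.

Lemma dotp_self_ge0 n (x : n.-tuple R) : 0 <= dotp x x.
Proof. by apply: sumr_ge0 => i _; rewrite -expr2 sqr_ge0. Qed.

Lemma sqr_enorm n (x : n.-tuple R) : enorm x ^+ 2 = dotp x x.
Proof. by rewrite sqr_sqrtr // dotp_self_ge0. Qed.

Lemma sphereE n (x : n.-tuple R) : sphere x <-> dotp x x = 1.
Proof.
split=> [|x1]; first by rewrite -sqr_enorm => ->; rewrite expr1n.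
by rewrite /sphere /= /enorm x1 sqrtr1.
Qed.

Lemma enorm_le1E n (x : n.-tuple R) : (enorm x <= 1) = (dotp x x <= 1).
Proof. by rewrite -sqr_enorm -[in RHS](expr1n R 2) ler_sqr ?nnegrE ?sqrtr_ge0. Qed.

Lemma dotp_self_gt0 n (u t : n.-tuple R) : dotp u t != 0 -> 0 < dotp t t.
Proof.
apply: contraR; rewrite -leNgt => tt_le0.
have t0 (i : 'I_n) : t`_i = 0.
  by apply/eqP; rewrite -sqrf_eq0 eq_le sqr_ge0 (le_trans (sqr_nth_le_dotp t i)).
by rewrite dotpE big1 // => i _; rewrite t0 mulr0.
Qed.

Lemma normr_nth_le1 n (x : n.-tuple R) (i : 'I_n) : dotp x x <= 1 -> `|x`_i| <= 1.
Proof.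
move=> x1; rewrite -(ler_pXn2r (_ : 0 < 2)%N) ?nnegrE// expr1n real_normK ?num_real//.
exact: le_trans (sqr_nth_le_dotp x i) x1.
Qed.

Lemma dotp_normalize n (u t : n.-tuple R) : dotp u (normalize t) = dotp u t / enorm t.
Proof. by rewrite /dotp mulr_suml; apply: eq_bigr => i _; rewrite tnth_map mulrA. Qed.

Lemma sphere_normalize n (t : n.-tuple R) : enorm t != 0 -> sphere (normalize t).
Proof.
move=> t0; apply/sphereE; rewrite dotp_normalize.
rewrite [dotp _ _](_ : _ = dotp t t / enorm t); last first.
  by rewrite dotpC dotp_normalize.
by rewrite -mulrA -invfM -expr2 sqr_enorm divff// -sqr_enorm sqrf_eq0.
Qed.

End dotp.

Section sphere_cone_box.
Variable R : realType.
Implicit Types n : nat.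

Lemma le_dotp_normalize n (u t : n.-tuple R) :
  0 <= dotp u t -> 0 < enorm t <= 1 -> dotp u t <= dotp u (normalize t).
Proof.
move=> ut0 /andP[t0 t1]; rewrite dotp_normalize ler_pdivlMr//.
by rewrite ler_piMr.
Qed.

Lemma box_dotp_ge n (x y t : n.-tuple R) s :
  sphere x -> box (fun i => (x`_i + y`_i) / 4) s t ->
  (1 + dotp x y) / 4 - n%:R * s <= dotp x t.
Proof.
move=> /sphereE x1 bt.
have x_le1 (i : 'I_n) : `|x`_i| <= 1 by apply: normr_nth_le1; rewrite x1.
have termwise (i : 'I_n) : x`_i * x`_i / 4 + x`_i * y`_i / 4 - s <= x`_i * t`_i.
  by move: (x_le1 i) (bt i); rewrite !ler_norml => /andP[? ?] /andP[? ?]; nra.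
rewrite [dotp x t]dotpE; apply: le_trans (ler_sum _ (fun i _ => termwise i)).
by rewrite !big_split /= sumrN sumr_const card_ord -!mulr_suml -!dotpE x1 -mulr_natr; lra.
Qed.

Lemma box_dotp_self_le n (x y t : n.-tuple R) s :
  sphere x -> sphere y -> box (fun i => (x`_i + y`_i) / 4) s t ->
  dotp t t <= 1 / 2 + 2 * n%:R * s ^+ 2.
Proof.
move=> /sphereE x1 /sphereE y1 bt.
have termwise (i : 'I_n) : t`_i * t`_i <= x`_i * x`_i / 4 + y`_i * y`_i / 4 + 2 * s ^+ 2.
  move: (bt i); rewrite ler_norml => /andP[? ?].
  have := sqr_ge0 (x`_i - y`_i); have := sqr_ge0 ((x`_i + y`_i) / 2 - t`_i).
  nra.
rewrite dotpE; apply: le_trans (ler_sum _ (fun i _ => termwise i)) _.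
by rewrite !big_split /= sumr_const card_ord -!mulr_suml -!dotpE x1 y1 -mulr_natr; lra.
Qed.

Lemma box_sub_sphere_cone n (x y : n.-tuple R) s :
  sphere x -> sphere y -> 0 <= dotp x y -> 0 <= s <= 1 / 8 -> n%:R * s <= 1 / 8 ->
  box (fun i => (x`_i + y`_i) / 4) s `<=`
  sphere_cone (@sphere R n `&` [set u | 1 / 8 <= dotp x u]
                           `&` [set u | 1 / 8 <= dotp y u]).
Proof.
move=> x1 y1 xy0 /andP[s0 s8] ns t bt.
have byt : box (fun i => (y`_i + x`_i) / 4) s t.
  by move=> i; rewrite (addrC y`_i); exact: bt.
have xt := box_dotp_ge x1 bt; have yt := box_dotp_ge y1 byt.
rewrite dotpC in yt.
have tt_le1 : dotp t t <= 1.
  have : s * (n%:R * s) <= 1 / 64 by nra.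
  by have := box_dotp_self_le x1 y1 bt; lra.
have t0 : 0 < enorm t by rewrite sqrtr_gt0 (dotp_self_gt0 (u := x)) //; lra.
have t01 : 0 < enorm t <= 1 by rewrite t0 enorm_le1E.
split=> //; split; first split.
- exact/sphere_normalize/lt0r_neq0.
- by apply: le_trans (le_dotp_normalize _ t01); lra.
- by apply: le_trans (le_dotp_normalize _ t01); lra.
Qed.

Lemma unit_ball_sub_box n : @unit_ball R n `<=` box (fun=> 0) 1.
Proof.
by move=> x; rewrite /unit_ball /= enorm_le1E => x1 i; rewrite subr0 normr_nth_le1.
Qed.

Lemma sphere_unif_ge_box n (A : set (n.-tuple R)) c s :
  0 < s -> box c s `<=` sphere_cone A -> ((s ^+ n)%:E <= sphere_unif A)%E.
Proof.
move=> s0 boxA.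
have cone_ge : (((2 * s) ^+ n)%:E <= lebesgue_vol (sphere_cone A))%E.
  by rewrite -(lebesgue_vol_box n c (ltW s0)); exact: le_lebesgue_vol.
have ball_ge : (((2 * s) ^+ n)%:E <= lebesgue_vol (@unit_ball R n))%E.
  by apply: le_trans cone_ge (le_lebesgue_vol _) => t [/andP[_]].
have ball_le : (lebesgue_vol (@unit_ball R n) <= (2 ^+ n)%:E)%E.
  rewrite -[2]mulr1 -(lebesgue_vol_box n (fun=> 0)) //.
  exact/le_lebesgue_vol/unit_ball_sub_box.
have ball_fin : lebesgue_vol (@unit_ball R n) \is a fin_num.
  by rewrite ge0_fin_numE ?lebesgue_vol_ge0 // (le_lt_trans ball_le) ?ltry.
rewrite -(fineK ball_fin) !lee_fin in ball_ge ball_le.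
have ball_gt0 : 0 < fine (lebesgue_vol (@unit_ball R n)).
  by apply: lt_le_trans ball_ge; rewrite exprn_gt0 // mulr_gt0.
rewrite /sphere_unif; apply: le_trans (lee_wpmul2r _ cone_ge); last first.
  by rewrite lee_fin invr_ge0 ltW.
rewrite -EFinM lee_fin exprMn -mulrA mulrC mulrAC ler_pdivlMr //.
by apply: ler_wpM2l => //; rewrite exprn_ge0 // ltW.
Qed.

End sphere_cone_box.

Lemma sg_eq_ge_normE (R : realDomainType) (a b g : R) : 0 < g ->
  (Num.sg a = Num.sg b /\ g <= `|a| /\ g <= `|b|) <->
  (g <= a /\ g <= b \/ a <= - g /\ b <= - g).
Proof.
move=> g0.
have [a0|a0|->] := ltrgtP a 0;
  [rewrite (ltr0_sg a0) (ltr0_norm a0)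
  |rewrite (gtr0_sg a0) (gtr0_norm a0)
  |rewrite sgr0 normr0];
have [b0|b0|->] := ltrgtP b 0;
  rewrite ?(ltr0_sg b0) ?(ltr0_norm b0) ?(gtr0_sg b0) ?(gtr0_norm b0) ?sgr0 ?normr0; lra.
Qed.

Section measurable_dotp.
Variables (R : realType) (n : nat).
Implicit Types (u : n.-tuple R) (g : R).

Lemma measurable_dotp u : measurable_fun setT (dotp u).
Proof.
apply: measurable_sum => i.
apply: measurable_realfun.measurable_funM; first exact: measurable_cst.
exact: measurable_tnth.
Qed.

Lemma measurable_dotp_self : measurable_fun setT (fun x : n.-tuple R => dotp x x).
Proof.
apply: measurable_sum => i.
by apply: measurable_realfun.measurable_funM; exact: measurable_tnth.
Qed.

Lemma measurable_dotp_ge u g : measurable [set x | g <= dotp u x].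
Proof.
rewrite -[X in measurable X]setTI.
exact: (measurable_fun_le (f := cst g)) (measurable_cst _) (measurable_dotp u).
Qed.

Lemma measurable_dotp_le u g : measurable [set x | dotp u x <= g].
Proof.
rewrite -[X in measurable X]setTI.
exact: (measurable_fun_le (g := cst g)) (measurable_dotp u) (measurable_cst _).
Qed.

Lemma measurable_sphere : measurable (@sphere R n).
Proof.
have := measurable_dotp_self measurableT (measurable_set1 1); rewrite setTI.
by congr measurable; apply/funext => x; apply/propext; rewrite sphereE.
Qed.

Lemma measurable_sg_eq_ge_norm (x y : n.-tuple R) g : 0 < g ->
  measurable [set xi | Num.sg (dotp x xi) = Num.sg (dotp y xi)
                       /\ g <= `|dotp x xi| /\ g <= `|dotp y xi|].
Proof.
move=> g0; rewrite (_ : [set xi | _] =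
  [set xi | g <= dotp x xi] `&` [set xi | g <= dotp y xi] `|`
  [set xi | dotp x xi <= - g] `&` [set xi | dotp y xi <= - g]).
  by apply: measurableU; apply: measurableI;
    (exact: measurable_dotp_ge || exact: measurable_dotp_le).
by apply/funext => xi; apply/propext; exact: sg_eq_ge_normE.
Qed.

End measurable_dotp.

Theorem lemma3p5 (R : realType) (d : nat) (C C' : R) :
  0 < C -> 0 < C' ->
  exists beta gamma : R, 0 < beta /\ 0 < gamma /\
    forall D : probability (d.-tuple R) R,
      D (@sphere R d) = 1%E ->
      (forall A : set (d.-tuple R), measurable A -> A `<=` @sphere R d ->
         (C%:E * sphere_unif A <= D A)%E /\ (D A <= C'%:E * sphere_unif A)%E) ->
      forall x1 x2 : d.-tuple R,
        sphere x1 -> sphere x2 -> 0 <= dotp x1 x2 ->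
        (beta%:E <= D [set xi | Num.sg (dotp x1 xi) = Num.sg (dotp x2 xi)
                                /\ (gamma <= `|dotp x1 xi|)%R
                                /\ (gamma <= `|dotp x2 xi|)%R])%E.
Proof.
move=> C0 _; pose s : R := (8 * d.+1%:R)^-1.
have s_gt0 : 0 < s by rewrite invr_gt0 mulr_gt0 ?ltr0n.
have sd1 : s * (8 * (d%:R + 1)) = 1 by rewrite natr1 mulVf ?mulf_neq0 ?pnatr_eq0.
have d_ge0 : 0 <= d%:R :> R := ler0n _ d.
have ds_le : d%:R * s <= 1 / 8 by nra.
have s_range : 0 <= s <= 1 / 8 by rewrite ltW //=; nra.
exists (C * s ^+ d), (1 / 8); split; first by rewrite mulr_gt0 // exprn_gt0.
split=> [|D _ DC x1 x2 x1S x2S x12]; first by lra.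
pose A := @sphere R d `&` [set u | 1 / 8 <= dotp x1 u] `&` [set u | 1 / 8 <= dotp x2 u].
have mA : measurable A.
  apply: measurableI; first apply: measurableI.
  - exact: measurable_sphere.
  - exact: measurable_dotp_ge.
  - exact: measurable_dotp_ge.
have A_sub : A `<=` [set xi | Num.sg (dotp x1 xi) = Num.sg (dotp x2 xi)
                              /\ 1 / 8 <= `|dotp x1 xi| /\ 1 / 8 <= `|dotp x2 xi|].
  by move=> u [[_ ?] ?]; apply/sg_eq_ge_normE; [lra|left].
apply: le_trans (le_measure _ _ _ A_sub); rewrite ?inE //; last first.
  by apply: measurable_sg_eq_ge_norm; lra.
apply: le_trans (DC A mA (fun _ Au => Au.1.1)).1.
rewrite EFinM; apply: lee_wpmul2l; first by rewrite lee_fin ltW.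
exact: sphere_unif_ge_box s_gt0 (box_sub_sphere_cone x1S x2S x12 s_range ds_le).
Qed.
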